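(* Let $R$ be a commutative ring and $p$ a prime. Define $I_0=R$ and, for $i>0$, $I_i=\{r\in R: r^p\in pI_{i-1}\}$. Then for each $i\ge0$ the set $I_i$ is an ideal of $R$. *)

From mathcomp Require Import all_boot all_algebra.
Set Implicit Arguments. Unset Strict Implicit. Unset Printing Implicit Defensive.
Import GRing.Theory.
Local Open Scope ring_scope.

Fixpoint Iseq (R : comPzRingType) (p : nat) (i : nat) : R -> Prop :=
  match i with
  | 0 => fun _ => True
  | i'.+1 => fun r => exists2 x : R, Iseq p i' x & r ^+ p = p%:R * x
  end.

Definition is_ideal (R : comPzRingType) (S : R -> Prop) : Prop :=
  [/\ S 0,
      (forall x y, S x -> S y -> S (x + y)),
      (forall x, S x -> S (- x)) &
      (forall a x, S x -> S (a * x))].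

From mathcomp Require Import all_boot all_algebra.
Set Implicit Arguments.
Unset Strict Implicit.
Unset Printing Implicit Defensive.

Import GRing.Theory.
Local Open Scope ring_scope.

(* Closure under scalars comes from (c x)^p = p (c^p a).
   For sums, if x^p = p a and y^p = p b with a, b in I_{i-1}, then
   (x + y)^p = p (a + b + x w), since p divides C(p, k) for 0 < k < p; and
   x w lies in I_{i-1} because x lies in I_i, which is contained in I_{i-1}. *)

Lemma exprD_prime (R : comPzRingType) (p : nat) (x y : R) : prime p ->
  exists w : R, (x + y) ^+ p = x ^+ p + y ^+ p + p%:R * (x * w).
Proof.
case: p => [|[|n]] // p_pr.
exists (\sum_(k < n.+1) x ^+ (n - k) * y ^+ k.+1 *+ ('C(n.+2, k.+1) %/ n.+2)).
rewrite exprDn big_ord_recr big_ord_recl /= subn0 subnn bin0 binn.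
rewrite expr0 mulr1 mul1r !mulr1n addrAC; congr (_ + _).
rewrite !mulr_sumr; apply: eq_bigr => k _.
have k_le_n : (k <= n)%N by rewrite -ltnS.
rewrite /bump leq0n add1n subSS subSn // exprS -mulrA mulrnAr mulrCA.
rewrite mulr_natl -mulrnA divnK //.
by apply: prime_dvd_bin; rewrite //= ltnS.
Qed.

Section PowerIdeals.

Variables (R : comPzRingType) (p : nat).

Lemma IseqS_sub (i : nat) (r : R) : Iseq p i.+1 r -> Iseq p i r.
Proof. by elim: i r => [//|i IHi] r [x /IHi Ix rp]; exists x. Qed.

Lemma is_ideal_IseqS (i : nat) : prime p ->
  is_ideal (Iseq (R:=R) p i) -> is_ideal (Iseq (R:=R) p i.+1).
Proof.
move=> p_pr [I0 ID _ IM].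
have ISM (c x : R) : Iseq p i.+1 x -> Iseq p i.+1 (c * x).
  by case=> a Ia xp; exists (c ^+ p * a); [apply: IM | rewrite exprMn xp mulrCA].
split; last exact: ISM.
- by exists 0; [exact: I0 | rewrite expr0n eqn0Ngt prime_gt0 // mulr0].
- move=> x y Ix [b Ib yp]; have [a Ia xp] := Ix.
  have [w xyp] := exprD_prime x y p_pr.
  exists (a + b + x * w); last by rewrite xyp xp yp !mulrDr.
  by rewrite [x * w]mulrC; exact: ID _ _ (ID _ _ Ia Ib) (IM w _ (IseqS_sub Ix)).
- by move=> x /(ISM (-1)); rewrite mulN1r.
Qed.

End PowerIdeals.

Theorem lemma2p2 (R : comPzRingType) (p : nat) (hp : prime p) (i : nat) :
  is_ideal (Iseq (R:=R) p i).
Proof.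
elim: i => [|i IHi]; last exact: is_ideal_IseqS.
by split.
Qed.
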